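(* Let $I$ be a quasipolar general ring and let $A$ be a two-sided ideal of $I$. Then $A$ is a quasipolar general ring.
   Context: A general ring is an associative ring not necessarily having an identity. For a general ring $K$ and $p,q\in K$, $p*q=p+q-pq$; $Q(K)=\{q\in K\mid p*q=0=q*p\text{ for some }p\in K\}$; $\mathrm{comm}_K(a)=\{x\in K\mid xa=ax\}$, $\mathrm{comm}_K^2(a)=\{x\in K\mid xy=yx\text{ for all }y\in\mathrm{comm}_K(a)\}$; $QN(K)=\{q\in K\mid qx\in Q(K)\text{ for all }x\in\mathrm{comm}_K(q)\}$. An element $a\in K$ is quasipolar in $K$ if there is an idempotent $p\in\mathrm{comm}_K^2(a)$ with $a+p\in Q(K)$ and $a-ap\in QN(K)$; $K$ is a quasipolar general ring if every element of $K$ is quasipolar in $K$ (all notions computed inside $K$). *)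

From HB Require Import structures.
From mathcomp Require Import all_boot all_order all_algebra.
Set Implicit Arguments. Unset Strict Implicit. Unset Printing Implicit Defensive.
Import GRing.Theory.
Local Open Scope ring_scope.

(* A general ring: an associative ring not necessarily having an identity.
   Additive group structure from a zmodType, plus an associative,
   bi-distributive multiplication (no unit required). *)
Record genRing := GenRing {
  gr_sort :> zmodType;
  gr_mul : gr_sort -> gr_sort -> gr_sort;
  gr_mulA : associative gr_mul;
  gr_mulDl : left_distributive gr_mul +%R;
  gr_mulDr : right_distributive gr_mul +%R
}.

Section GenRingDefs.
Variable K : genRing.
Local Notation "x ** y" := (gr_mul x y) (at level 40, left associativity).

(* Throughout, S : K -> Prop is the carrier of the general ring under
   consideration (a subring of K, e.g. K itself or an ideal of K);
   all notions are computed inside S, i.e. quantifiers range over S. *)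

Definition circ (p q : K) : K := p + q - p ** q.

Definition Qset (S : K -> Prop) (q : K) : Prop :=
  S q /\ exists p, S p /\ circ p q = 0 /\ circ q p = 0.

Definition comm (S : K -> Prop) (a : K) (x : K) : Prop :=
  S x /\ x ** a = a ** x.

Definition comm2 (S : K -> Prop) (a : K) (x : K) : Prop :=
  S x /\ forall y, comm S a y -> x ** y = y ** x.

Definition QN (S : K -> Prop) (q : K) : Prop :=
  S q /\ forall x, comm S q x -> Qset S (q ** x).

Definition quasipolar_in (S : K -> Prop) (a : K) : Prop :=
  exists p, comm2 S a p /\ p ** p = p /\ Qset S (a + p) /\ QN S (a - a ** p).

Definition quasipolar_ring (S : K -> Prop) : Prop :=
  forall a, S a -> quasipolar_in S a.

Definition two_sided_ideal (S : K -> Prop) : Prop :=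
  [/\ S 0,
      (forall x y, S x -> S y -> S (x - y)),
      (forall r x, S x -> S (r ** x)) &
      (forall r x, S x -> S (x ** r))].

End GenRingDefs.

From mathcomp Require Import all_boot all_order all_algebra.
Import GRing.Theory.
Local Open Scope ring_scope.

(* Let a be an element of the ideal A and let p be the
   idempotent witnessing that a is quasipolar in I.  We show that the same
   p witnesses that a is quasipolar in A.  Three facts make this work:
   - quasi-inverses stay in the ideal: if u * q = 0 (circle operation) then
     u = uq - q, so an element of A that is quasi-invertible in I is
     quasi-invertible in A, i.e. Q(I) restricted to A lies in Q(A);
   - p itself lies in A: from a + p in Q(I) with quasi-inverse u one gets
     p = u(ap) - ap, and ap is in A;
   - comm^2 and QN only shrink their quantifier range when passing from I to
     A (commutants in A are commutants in I), so comm^2_I(a) and QN(I),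
     restricted to elements of A, are contained in comm^2_A(a) and QN(A). *)

Section GeneralRing.
Variable I : genRing.
Local Notation "x ** y" := (gr_mul x y) (at level 40, left associativity).
Local Notation whole := (fun _ : I => True).

(* Left multiplication by zero and by an opposite, derived from
   distributivity alone since a general ring has no identity. *)
Lemma gmul0r (x : I) : 0 ** x = 0.
Proof.
have e := gr_mulDl 0 0 x; rewrite addr0 in e.
by apply: (addrI (0 ** x)); rewrite -e addr0.
Qed.

Lemma gmulNr (x y : I) : (- x) ** y = - (x ** y).
Proof. by apply: (addrI (x ** y)); rewrite -gr_mulDl !subrr gmul0r. Qed.

Lemma circ_eq0_expand {u q : I} : circ u q = 0 -> u = u ** q - q.
Proof.
move=> /subr0_eq e.
by rewrite -e addrK.
Qed.

Section Ideal.
Variable A : I -> Prop.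
Hypothesis idealA : two_sided_ideal A.

Lemma ideal_add (x y : I) : A x -> A y -> A (x + y).
Proof.
case: idealA => A0 AB _ _ Ax Ay.
by have := AB _ _ Ax (AB _ _ A0 Ay); rewrite sub0r opprK.
Qed.

(* An element of A that is quasi-invertible in I is quasi-invertible in A:
   its quasi-inverse u = uq - q automatically lies in A. *)
Lemma Qset_restrict (q : I) : A q -> Qset whole q -> Qset A q.
Proof.
move=> Aq [_ [u [_ [uq qu]]]]; split=> //; exists u; split=> //.
case: idealA => _ AB Al _.
by rewrite (circ_eq0_expand uq); apply: AB (Al _ _ Aq) Aq.
Qed.

(* If a is in A, p is idempotent and a + p is quasi-invertible in I, then
   p lies in A: with u the quasi-inverse, p = u(ap) - ap. *)
Lemma idempotent_in_ideal (a p : I) :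
  A a -> p ** p = p -> Qset whole (a + p) -> A p.
Proof.
move=> Aa pp [_ [u [_ [u_ap _]]]].
case: idealA => _ AB Al Ar.
have Aap : A (a ** p) by exact: Ar.
have e := circ_eq0_expand u_ap.
have ep : u ** p = (u ** (a + p) - (a + p)) ** p by rewrite -e.
rewrite gr_mulDl gmulNr -gr_mulA !gr_mulDl !gr_mulDr pp in ep.
have -> : p = u ** (a ** p) - a ** p.
  apply/eqP; rewrite eq_sym subr_eq; apply/eqP.
  apply: (addrI (u ** p)); rewrite [in RHS]ep.
  by rewrite [p + _]addrC subrK addrC.
exact: AB (Al _ _ Aap) Aap.
Qed.

(* Commutants in A are commutants in I, hence the double commutant only
   grows when restricted to A. *)
Lemma comm2_restrict (a p : I) : A p -> comm2 whole a p -> comm2 A a p.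
Proof. by move=> Ap [_ hp]; split=> // y [_ ya]; exact: hp. Qed.

Lemma QN_restrict (q : I) : A q -> QN whole q -> QN A q.
Proof.
move=> Aq [_ hq]; split=> // x [Ax xq].
case: idealA => _ _ _ Ar.
by apply: Qset_restrict; [exact: Ar | exact: hq].
Qed.

End Ideal.
End GeneralRing.

Theorem theorem3p2 (I : genRing) (A : I -> Prop) :
  quasipolar_ring (fun _ : I => True) ->
  two_sided_ideal A ->
  quasipolar_ring A.
Proof.
move=> qpI idealA a Aa.
have [p [c2p [pp [Qap QNap]]]] := qpI a Logic.I.
have Ap : A p by exact: idempotent_in_ideal Aa pp Qap.
have Aap : A (gr_mul a p) by case: idealA => _ _ _ Ar; exact: Ar.
have Aa_ap : A (a - gr_mul a p) by case: idealA => _ AB _ _; exact: AB.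
exists p; split; first exact: comm2_restrict.
split=> //; split.
- by apply: Qset_restrict => //; exact: ideal_add.
- exact: QN_restrict.
Qed.
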